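(* Consider a controlled Markov chain with finite state space $X$, finite action set $U$, unknown transition probabilities $p$ and rewards $r(x,u)\in(0,1]$, controlled by the RBMLE algorithm described in the context. For an episode $k$ and $\pi\in\Pi_{sd}$, let \[ \theta_{k,\pi}\in\arg\max_{\theta\in\Theta}\Big\{\alpha(\tau_k)J(\theta,\pi)-\sum_{(x,u)}n_k(x,u)KL(\hat p_k(x,u),\theta(x,u))\Big\}. \] Then \[ |\theta_{k,\pi}(x,y,u)-\hat p_k(x,y,u)|\le d_2(x,u;\tau_k)\quad\forall (x,y,u)\in X\times X\times U, \] where $d_2(x,u;t):=\sqrt{\frac{\alpha(t)}{2n(x,u;t)}}$.
   Context: $\Pi_{sd}$ denotes the stationary deterministic policies $X\to U$. For a transition kernel $\theta$ and policy $\pi$, $J(\theta,\pi)$ is the long-term average reward $\liminf_T\frac1T\mathbb{E}\sum_{t=1}^Tr(x(t),u(t))$ under $\theta$ and $\pi$. $\Theta$ is the set of $\theta\in[0,1]^{|X|\times|X|\times|U|}$ with $\theta(x,y,u)=0$ whenever $p(x,y,u)=0$ (known zero pattern) and $\sum_y\theta(x,y,u)=1$; $\theta(x,u)=\{\theta(x,y,u)\}_{y}$. $KL(p_1,p_2)=\sum_xp_1(x)\log\frac{p_1(x)}{p_2(x)}$. $n(x,u;t)$ is the number of times action $u$ was applied in state $x$ up to time $t$, $n(x,y,u;t)$ the number of those followed by a move to $y$, $\hat p(x,y,u;t)=\frac{n(x,y,u;t)}{n(x,u;t)\vee1}$. Episodes $\mathcal{E}_k=[\tau_k,\tau_{k+1}-1]$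 with $|\mathcal{E}_k|=2^k$; $n_k=n(\cdot;\tau_k)$, $\hat p_k=\hat p(\tau_k)$; $\alpha(t)=a\log(t^b|X|^2|U|)$ with constants $a>0$, $b>2$. RBMLE: index $I_k(\pi)=\max_{\theta\in\Theta}\{\alpha(\tau_k)J(\theta,\pi)-\sum_{(x,u)}n_k(x,u)KL(\hat p_k(x,u),\theta(x,u))\}$, and during episode $k$ the policy $\pi_k\in\arg\max_{\pi\in\Pi_{sd}}I_k(\pi)$ is applied. *)

From HB Require Import structures.
From mathcomp Require Import all_boot all_order all_algebra.
From mathcomp Require Import all_classical all_reals.
From mathcomp Require Import ereal sequences exp.
Set Implicit Arguments. Unset Strict Implicit. Unset Printing Implicit Defensive.
Import Order.TTheory GRing.Theory Num.Theory.
Local Open Scope ring_scope.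

Definition kernel (R : realType) (X U : finType) := X -> X -> U -> R.

Definition Theta (R : realType) (X U : finType) (p : kernel R X U) :
  set (kernel R X U) :=
  [set th | (forall x y u, 0 <= th x y u <= 1)
          /\ (forall x y u, p x y u = 0 -> th x y u = 0)
          /\ (forall x u, \sum_(y : X) th x y u = 1)].

Definition KL (R : realType) (X : finType) (p1 p2 : X -> R) : \bar R :=
  if [exists y, (0 < p1 y) && (p2 y == 0)] then +oo%E
  else (\sum_(y : X) (if p1 y == 0 then 0 else p1 y * ln (p1 y / p2 y)))%:E.

(* Distribution of the state at time t+1 under theta, policy pi, start x0
   (time 1 corresponds to index 0). *)
Fixpoint state_dist (R : realType) (X U : finType) (th : kernel R X U)
  (pi : X -> U) (x0 : X) (t : nat) : X -> R :=
  match t with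
  | 0 => fun y => if y == x0 then 1 else 0
  | t'.+1 => fun y => \sum_(x : X) state_dist th pi x0 t' x * th x y (pi x)
  end.

Definition avg_reward (R : realType) (X U : finType) (r : X -> U -> R)
  (th : kernel R X U) (pi : X -> U) (x0 : X) (T : nat) : R :=
  (T%:R)^-1 * \sum_(0 <= t < T) \sum_(y : X) state_dist th pi x0 t y * r y (pi y).

Definition J (R : realType) (X U : finType) (r : X -> U -> R)
  (x0 : X) (th : kernel R X U) (pi : X -> U) : R :=
  limn_inf (avg_reward r th pi x0).

Definition cnt (X U : finType) (xs : nat -> X) (us : nat -> U)
  (x : X) (u : U) (t : nat) : nat :=
  \sum_(1 <= s < t) ((xs s == x) && (us s == u)).

Definition cnt3 (X U : finType) (xs : nat -> X) (us : nat -> U)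
  (x y : X) (u : U) (t : nat) : nat :=
  \sum_(1 <= s < t) [&& xs s == x, us s == u & xs s.+1 == y].

Definition phat (R : realType) (X U : finType) (xs : nat -> X) (us : nat -> U)
  (t : nat) : kernel R X U :=
  fun x y u => (cnt3 xs us x y u t)%:R / (maxn (cnt xs us x u t) 1)%:R.

(* Episodes: |E_k| = 2^k starting at tau_0 = 1, so tau_k = 2^k. *)
Definition tau (k : nat) : nat := 2 ^ k.

Definition alpha (R : realType) (X U : finType) (a b : R) (t : nat) : R :=
  a * ln ((t%:R) `^ b * (#|X|%:R) ^+ 2 * #|U|%:R).

Definition rbmle_obj (R : realType) (X U : finType) (a b : R) (r : X -> U -> R)
  (x0 : X) (xs : nat -> X) (us : nat -> U) (k : nat)
  (pi : X -> U) (th : kernel R X U) : \bar R :=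
  ((alpha X U a b (tau k) * J r x0 th pi)%:E
   - \sum_(xu : X * U)
       ((cnt xs us xu.1 xu.2 (tau k))%:R%:E
        * KL (fun y => phat R xs us (tau k) xu.1 y xu.2) (fun y => th xu.1 y xu.2)))%E.

Definition rbmle_index (R : realType) (X U : finType) (p : kernel R X U)
  (a b : R) (r : X -> U -> R) (x0 : X) (xs : nat -> X) (us : nat -> U)
  (k : nat) (pi : X -> U) : \bar R :=
  ereal_sup [set rbmle_obj a b r x0 xs us k pi th | th in Theta p].

From HB Require Import structures.
From mathcomp Require Import all_boot all_order all_algebra.
From mathcomp Require Import all_classical all_reals.
From mathcomp Require Import ereal sequences exp.
From mathcomp Require Import topology normedtype derive realfun.
From mathcomp Require Import ring lra.
Set Implicit Arguments. Unset Strict Implicit. Unset Printing Implicit Defensive.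
Import Order.TTheory GRing.Theory Num.Theory.
Import numFieldNormedType.Exports.
Local Open Scope ring_scope.

(** The maximiser [th] does at least as well as the kernel [phat_fill th] that
    agrees with the empirical estimate [phat] wherever data are available.  That
    kernel has no KL penalty, so its objective is [alpha J >= 0]; as [J <= 1],
    the penalty of [th] is therefore at most [alpha].  Each term
    [n(x,u) KL(phat(x,u), th(x,u))] of the penalty is at least
    [2 n(x,u) (phat - th)^2] by Pinsker's inequality, whence the bound.
    Pinsker's inequality is reduced to two-point distributions by the log-sum
    inequality; the two-point case is a one-variable calculus estimate. *)

Section Pinsker.
Variable R : realType.
Implicit Types a b s t x y : R.

Definition bin_kl a b : R := a * ln (a / b) + (1 - a) * ln ((1 - a) / (1 - b)).

(* [bin_kl a s - 2 (a - s)^2] without its [s]-independent part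
   [a ln a + (1 - a) ln (1 - a)]. *)
Definition pinsker_gap a s : R :=
  - (a * ln s) - (1 - a) * ln (1 - s) - 2 * (a - s) ^+ 2.

Lemma is_derive_pinsker_gap a t : 0 < t < 1 ->
  is_derive t 1 (pinsker_gap a) ((t - a) * (1 - 2 * t) ^+ 2 / (t * (1 - t))).
Proof.
move=> /andP[t0 t1].
have dln : is_derive t 1 (@ln R) t^-1 by exact: is_derive1_ln.
have dln1 : is_derive t 1 (@ln R \o (cst 1 - id)) ((1 - t)^-1 * (0 - 1)).
  by apply: is_derive1_comp; apply: is_derive1_ln; rewrite subr_gt0.
have dsq : is_derive t 1 ((cst a - id) ^+ 2 : R -> R) ((2%:R * (a - t) ^+ 1) *: (0 - 1)).
  exact: is_deriveX.
have -> : pinsker_gap a = - (a *: @ln R) - (1 - a) *: (@ln R \o (cst 1 - id))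
                          - 2 *: ((cst a - id) ^+ 2 : R -> R).
  by apply/funext => s.
apply: is_derive_eq (is_deriveB (is_deriveB (is_deriveN (is_deriveZ a dln))
  (is_deriveZ (1 - a) dln1)) (is_deriveZ 2 dsq)) _.
rewrite /= expr1 /GRing.scale /=.
by field; rewrite ?subr_eq0 (gt_eqF t0) (gt_eqF t1).
Qed.

Lemma pinsker_gap_min a b : 0 < a < 1 -> 0 < b < 1 -> pinsker_gap a a <= pinsker_gap a b.
Proof.
move=> /andP[a0 a1] /andP[b0 b1].
have gap_derivable t : 0 < t < 1 -> derivable (pinsker_gap a) t 1.
  by move=> t01; have H := is_derive_pinsker_gap a t01; exact: ex_derive.
have gap_continuous c d :
    0 < c -> d < 1 -> ({within `[c, d], continuous (pinsker_gap a)})%classic.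
  move=> c0 d1; apply: derivable_within_continuous => t; rewrite in_itv /= => /andP[ct td].
  by apply: gap_derivable; rewrite (lt_le_trans c0 ct) (le_lt_trans td d1).
have gap_derive1E t : 0 < t < 1 ->
    derive1 (pinsker_gap a) t = (t - a) * ((1 - 2 * t) ^+ 2 / (t * (1 - t))).
  move=> t01; have H := is_derive_pinsker_gap a t01.
  by rewrite derive1E derive_val [RHS]mulrA.
have weight_ge0 t : 0 < t < 1 -> 0 <= (1 - 2 * t) ^+ 2 / (t * (1 - t)).
  by case/andP=> t0 t1; rewrite divr_ge0 ?sqr_ge0 // mulr_ge0 // ?subr_ge0 ltW.
have [ab|ba] := leP a b.
- apply: (@ger0_derive1_le_cc R (pinsker_gap a) a b).
  + move=> t; rewrite in_itv /= => /andP[ct tb].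
    by apply: gap_derivable; apply/andP; split; lra.
  + move=> t; rewrite in_itv /= => /andP[ct tb].
    have t01 : 0 < t < 1 by apply/andP; split; lra.
    by rewrite gap_derive1E // mulr_ge0 ?weight_ge0 // subr_ge0 ltW.
  + exact: gap_continuous.
  + by rewrite in_itv /= lexx ab.
  + by rewrite in_itv /= lexx ab.
  + exact: ab.
- apply: (@ler0_derive1_le_cc R (pinsker_gap a) b a).
  + move=> t; rewrite in_itv /= => /andP[bt ta].
    by apply: gap_derivable; apply/andP; split; lra.
  + move=> t; rewrite in_itv /= => /andP[bt ta].
    have t01 : 0 < t < 1 by apply/andP; split; lra.
    by rewrite gap_derive1E // mulr_le0_ge0 ?weight_ge0 // subr_le0 ltW.
  + exact: gap_continuous.
  + by rewrite in_itv /= lexx (ltW ba).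
  + by rewrite in_itv /= lexx (ltW ba).
  + exact: ltW.
Qed.

(* The case [a = 1] of [pinsker_gap_min], where [ln (1 - s)] is not
   differentiable at the endpoint [s = a]. *)
Lemma sqr_subr1_le_lnV b : 0 < b <= 1 -> 2 * (1 - b) ^+ 2 <= - ln b.
Proof.
move=> /andP[b0 b1].
pose h s := - ln s - 2 * (1 - s) ^+ 2.
have dh t : 0 < t -> is_derive t 1 h (- ((1 - 2 * t) ^+ 2 / t)).
  move=> t0.
  have dsq : is_derive t 1 ((cst 1 - id) ^+ 2 : R -> R) ((2%:R * (1 - t) ^+ 1) *: (0 - 1)).
    exact: is_deriveX.
  have -> : h = - @ln R - 2 *: ((cst 1 - id) ^+ 2 : R -> R) by apply/funext => s.
  apply: is_derive_eq (is_deriveB (is_deriveN (is_derive1_ln t0)) (is_deriveZ 2 dsq)) _.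
  rewrite /= expr1 /GRing.scale /=.
  by field; rewrite gt_eqF.
have : h 1 <= h b.
  apply: (@ler0_derive1_le_cc R h b 1).
  + move=> t; rewrite in_itv /= => /andP[bt _].
    by have H := dh t (lt_trans b0 bt); exact: ex_derive.
  + move=> t; rewrite in_itv /= => /andP[bt _].
    have H := dh t (lt_trans b0 bt); rewrite derive1E derive_val oppr_le0.
    by rewrite divr_ge0 ?sqr_ge0 // ltW // (lt_trans b0 bt).
  + apply: derivable_within_continuous => t; rewrite in_itv /= => /andP[bt _].
    by have H := dh t (lt_le_trans b0 bt); exact: ex_derive.
  + by rewrite in_itv /= lexx b1.
  + by rewrite in_itv /= lexx b1.
  + exact: b1.
by rewrite /h ln1 subrr expr0n /= mulr0 subr0 oppr0 => hb; lra.
Qed.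

Lemma mulr_ln_div x y : 0 <= x -> 0 < y -> x * ln (x / y) = x * ln x - x * ln y.
Proof.
rewrite le_eqVlt => /predU1P[<-|x0] y0; first by rewrite !mul0r subrr.
by rewrite ln_div ?mulrBr.
Qed.

Lemma bin_kl_ge_sqr a b : 0 <= a <= 1 -> 0 <= b <= 1 ->
  (0 < a -> 0 < b) -> (a < 1 -> b < 1) -> 2 * (a - b) ^+ 2 <= bin_kl a b.
Proof.
move=> /andP[a0 a1] /andP[b0 b1] ab0 ab1; rewrite /bin_kl.
have [b_0|b_neq0] := eqVneq b 0.
  subst b.
  have -> : a = 0.
    by apply/eqP; rewrite eq_le a0 andbT leNgt; apply/negP => /ab0; rewrite ltxx.
  by rewrite !subr0 mul0r divr1 ln1 !mulr0 expr0n /= mulr0 addr0.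
have [b_1|b_neq1] := eqVneq b 1.
  subst b.
  have -> : a = 1.
    by apply/eqP; rewrite eq_le a1 /= leNgt; apply/negP => /ab1; rewrite ltxx.
  by rewrite !subrr mul0r divr1 ln1 !mulr0 expr0n /= mulr0 addr0.
have b01 : 0 < b < 1 by rewrite !lt_def b_neq0 b0 eq_sym b_neq1 b1.
have [->|a_neq0] := eqVneq a 0.
  rewrite mul0r add0r subr0 mul1r div1r lnV ?posrE ?subr_gt0; last by case/andP: b01.
  rewrite sub0r sqrrN -{1}(subKr 1 b); apply: sqr_subr1_le_lnV; lra.
have [->|a_neq1] := eqVneq a 1.
  rewrite subrr mul0r addr0 mul1r div1r lnV ?posrE; last by case/andP: b01.
  by apply: sqr_subr1_le_lnV; lra.
have a01 : 0 < a < 1 by rewrite !lt_def a_neq0 a0 eq_sym a_neq1 a1.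
have := pinsker_gap_min a01 b01; rewrite /pinsker_gap subrr expr0n /= mulr0 subr0.
by rewrite !mulr_ln_div //; lra.
Qed.

Lemma mulr_ln_div_ge x y c : 0 <= x -> 0 <= y -> (0 < x -> 0 < y) -> 0 < c ->
  x * ln c + x - y * c <= x * ln (x / y).
Proof.
rewrite le_eqVlt => /predU1P[<-|x0] y_ge0 xy c0.
  by rewrite !mul0r add0r sub0r oppr_le0 mulr_ge0 // ltW.
have {xy y_ge0} y0 := xy x0.
have z0 : 0 < y * c / x by rewrite divr_gt0 // mulr_gt0.
(* [ln z <= z - 1] at [z = y c / x] *)
have : ln (y * c / x) <= y * c / x - 1.
  by have := @le_ln1Dx R (y * c / x - 1); rewrite [1 + _]addrC subrK; apply; lra.
move=> /(ler_wpM2l (ltW x0)); rewrite mulrBr mulrCA divff ?gt_eqF // mulr1.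
rewrite !ln_div ?lnM ?posrE ?mulr_gt0 //; lra.
Qed.

Lemma log_sum_le (I : finType) (A : pred I) (P Q : I -> R) :
  (forall i, 0 <= P i) -> (forall i, 0 <= Q i) -> (forall i, 0 < P i -> 0 < Q i) ->
  (\sum_(i | A i) P i) * ln ((\sum_(i | A i) P i) / \sum_(i | A i) Q i)
    <= \sum_(i | A i) P i * ln (P i / Q i).
Proof.
move=> P0 Q0 PQ; set SP := \sum_(i | A i) P i; set SQ := \sum_(i | A i) Q i.
have [SP_0|SP_neq0] := eqVneq SP 0.
  rewrite SP_0 mul0r big1 // => i Ai.
  by rewrite (psumr_eq0P (fun i _ => P0 i) SP_0) // mul0r.
have [j /andP[Aj Pj]] := psumr_neq0P (fun i _ => P0 i) (elimN eqP SP_neq0).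
have SP0 : 0 < SP by rewrite lt_def SP_neq0 sumr_ge0.
have SQ0 : 0 < SQ.
  by rewrite (lt_le_trans (PQ j Pj)) // /SQ (bigD1 j) //= lerDl sumr_ge0.
have term i : A i -> P i * ln (SP / SQ) + P i - Q i * (SP / SQ) <= P i * ln (P i / Q i).
  by move=> _; exact: mulr_ln_div_ge (P0 i) (Q0 i) (PQ i) (divr_gt0 SP0 SQ0).
apply: le_trans (ler_sum _ term).
rewrite big_split big_split /= sumrN -!mulr_suml -/SP -/SQ.
by rewrite mulrCA divff ?gt_eqF // mulr1 addrK.
Qed.

Lemma bin_kl_le_sum (I : finType) (P Q : I -> R) i0 :
  (forall i, 0 <= P i) -> (forall i, 0 <= Q i) -> (forall i, 0 < P i -> 0 < Q i) ->
  \sum_i P i = 1 -> \sum_i Q i = 1 ->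
  bin_kl (P i0) (Q i0) <= \sum_i P i * ln (P i / Q i).
Proof.
move=> P0 Q0 PQ P1 Q1; rewrite /bin_kl (bigD1 i0) //=.
rewrite (bigD1 i0) //= in P1; rewrite (bigD1 i0) //= in Q1.
have -> : 1 - P i0 = \sum_(i | i != i0) P i by rewrite -P1 addrAC subrr add0r.
have -> : 1 - Q i0 = \sum_(i | i != i0) Q i by rewrite -Q1 addrAC subrr add0r.
by rewrite lerD2l log_sum_le.
Qed.

Lemma pinsker (I : finType) (P Q : I -> R) i0 :
  (forall i, 0 <= P i) -> (forall i, 0 <= Q i) -> (forall i, 0 < P i -> 0 < Q i) ->
  \sum_i P i = 1 -> \sum_i Q i = 1 ->
  2 * (P i0 - Q i0) ^+ 2 <= \sum_i P i * ln (P i / Q i).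
Proof.
move=> P0 Q0 PQ P1 Q1; apply: le_trans (bin_kl_le_sum i0 P0 Q0 PQ P1 Q1).
rewrite (bigD1 i0) //= in P1; rewrite (bigD1 i0) //= in Q1.
set SP := \sum_(i | i != i0) P i in P1; set SQ := \sum_(i | i != i0) Q i in Q1.
have SP0 : 0 <= SP by exact: sumr_ge0.
have SQ0 : 0 <= SQ by exact: sumr_ge0.
apply: bin_kl_ge_sqr => //.
- by rewrite P0 /=; lra.
- by rewrite Q0 /=; lra.
- exact: PQ.
- apply: contraTT; rewrite -!leNgt => Q1le.
  have /psumr_eq0P SQ_0 : SQ = 0 by lra.
  have SP_0 : SP = 0.
    apply: big1 => i ii0; apply/eqP; rewrite eq_le P0 andbT leNgt.
    by apply/negP => /PQ; rewrite SQ_0 // ltxx.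
  lra.
Qed.

End Pinsker.

Section KL.
Variables (R : realType) (X : finType).
Implicit Types P Q : X -> R.

Lemma KL_ge_sqr P Q y0 : (forall y, 0 <= P y) -> (forall y, 0 <= Q y) ->
  \sum_y P y = 1 -> \sum_y Q y = 1 -> ((2 * (P y0 - Q y0) ^+ 2)%:E <= KL P Q)%E.
Proof.
move=> P0 Q0 P1 Q1; rewrite /KL; case: ifPn => [_|/existsPn PQ]; first exact: leey.
rewrite lee_fin (eq_bigr (fun y => P y * ln (P y / Q y))) => [|y _]; last first.
  by case: eqP => // ->; rewrite mul0r.
apply: pinsker => // y Py.
by have := PQ y; rewrite Py lt_def Q0 andbT.
Qed.

Lemma KLxx P : KL P P = 0%E.
Proof.
rewrite /KL; case: ifPn => [/existsP[y /andP[Py /eqP Py0]]|_].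
  by rewrite Py0 ltxx in Py.
by rewrite big1 // => y _; case: eqP => // /eqP Py; rewrite divff // ln1 mulr0.
Qed.
End KL.

Section AverageReward.
Variables (R : realType) (X U : finType) (th : kernel R X U) (pi : X -> U) (x0 : X).
Hypothesis th_ge0 : forall x y u, 0 <= th x y u.
Hypothesis th_sum1 : forall x u, \sum_y th x y u = 1.

Lemma state_dist_ge0 t y : 0 <= state_dist th pi x0 t y.
Proof.
elim: t y => [|t IH] y /=; first by case: eqP.
by apply: sumr_ge0 => x _; rewrite mulr_ge0.
Qed.

Lemma sum_state_dist t : \sum_y state_dist th pi x0 t y = 1.
Proof.
elim: t => [|t IH] /=; first by rewrite -big_mkcond /= big_pred1_eq.
rewrite exchange_big /= -IH; apply: eq_bigr => x _.
by rewrite -mulr_sumr th_sum1 mulr1.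
Qed.

Variable r : X -> U -> R.
Hypothesis r_itv : forall x u, 0 < r x u <= 1.

Lemma expected_reward_itv t : 0 <= \sum_y state_dist th pi x0 t y * r y (pi y) <= 1.
Proof.
have r0 y : 0 <= r y (pi y) by case/andP: (r_itv y (pi y)) => /ltW.
have r1 y : r y (pi y) <= 1 by case/andP: (r_itv y (pi y)).
rewrite sumr_ge0 => [|y _]; last by rewrite mulr_ge0 ?state_dist_ge0.
rewrite -(sum_state_dist t) ler_sum // => y _.
by rewrite ler_piMr ?state_dist_ge0.
Qed.

Lemma avg_reward_itv T : 0 <= avg_reward r th pi x0 T <= 1.
Proof.
rewrite /avg_reward mulr_ge0 ?invr_ge0 ?sumr_ge0 //=; last first.
  by move=> t _; case/andP: (expected_reward_itv t).
case: T => [|T]; first by rewrite invr0 mul0r.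
rewrite ler_pdivrMl ?ltr0n // mulr1.
have -> : T.+1%:R = \sum_(0 <= t < T.+1) (1 : R) by rewrite sumr_const_nat subn0.
by apply: ler_sum_nat => t _; case/andP: (expected_reward_itv t).
Qed.
End AverageReward.

Lemma limn_inf_itv (R : realType) (u : R^nat) (l h : R) :
  (forall n, l <= u n <= h) -> l <= limn_inf u <= h.
Proof.
move=> u_itv.
have ub : has_ubound (range u) by exists h => _ [n _ <-]; case/andP: (u_itv n).
have lb : has_lbound (range u) by exists l => _ [n _ <-]; case/andP: (u_itv n).
rewrite /limn_inf (cvg_lim _ (cvg_infs_sup ub lb)) //.
have infs_ge n : l <= infs u n.
  apply: lb_le_inf; first by exists (u n); exists n => /=.
  by move=> _ [m _ <-]; case/andP: (u_itv m).
have infs_le n : infs u n <= h.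
  apply: le_trans (_ : u n <= h); last by case/andP: (u_itv n).
  by apply: ge_inf; [exact: has_lbound_sdrop | exists n => /=].
apply/andP; split.
  apply: le_trans (infs_ge 0%N) _.
  by apply: ub_le_sup; [exists h => _ [n _ <-] | exists 0%N].
by apply: ge_sup; [exists (infs u 0%N); exists 0%N | move=> _ [n _ <-]].
Qed.

Lemma J_itv (R : realType) (X U : finType) (p : kernel R X U) (r : X -> U -> R) x0 th pi :
  (forall x u, 0 < r x u <= 1) -> Theta p th -> 0 <= J r x0 th pi <= 1.
Proof.
move=> r_itv [th01 [_ th_sum1]]; apply: limn_inf_itv => T.
by apply: avg_reward_itv => // x y u; case/andP: (th01 x y u).
Qed.

Lemma alpha_ge0 (R : realType) (X U : finType) (a b : R) (x : X) (u : U) t :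
  0 <= a -> 0 <= b -> (0 < t)%N -> 0 <= alpha X U a b t.
Proof.
move=> a0 b0 t0; rewrite /alpha mulr_ge0 // ln_ge0 //.
have t_b : 1 <= (t%:R : R) `^ b.
  by have := @ler_powR R t%:R; rewrite ler1n => /(_ t0 0 b b0); rewrite powRr0.
have card_ge1 (T : finType) (z : T) : (1 : R) <= #|T|%:R.
  by rewrite ler1n; apply/card_gt0P; exists z.
by rewrite !mulr_ege1 ?exprn_ege1 // card_ge1.
Qed.

Section EmpiricalKernel.
Variables (R : realType) (X U : finType) (xs : nat -> X) (us : nat -> U).

Lemma sum_cnt3 x u t : (\sum_y cnt3 xs us x y u t)%N = cnt xs us x u t.
Proof.
rewrite /cnt3 /cnt exchange_big /=; apply: eq_bigr => s _.
case: (xs s == x); case: (us s == u) => /=; try by rewrite big1.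
rewrite (bigD1 (xs s.+1)) //= eqxx big1 // => y.
by rewrite eq_sym => /negbTE ->.
Qed.

Lemma cnt3_le x y u t : (cnt3 xs us x y u t <= cnt xs us x u t)%N.
Proof.
rewrite /cnt3 /cnt; apply: leq_sum => s _.
by case: (xs s == x); case: (us s == u) => //=; case: (xs s.+1 == y).
Qed.

Variable t : nat.

Lemma phat_itv x y u : 0 <= phat R xs us t x y u <= 1.
Proof.
rewrite divr_ge0 //= ler_pdivrMr ?ltr0n ?leq_max ?orbT // mul1r ler_nat.
exact: leq_trans (cnt3_le x y u t) (leq_maxl _ 1).
Qed.

Lemma sum_phat x u : (0 < cnt xs us x u t)%N -> \sum_y phat R xs us t x y u = 1.
Proof.
move=> n0; rewrite /phat -mulr_suml -natr_sum sum_cnt3.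
by rewrite (maxn_idPl n0) divff // pnatr_eq0 -lt0n.
Qed.

Lemma phat_eq0 (p : kernel R X U) x y u :
  (forall s, (1 <= s)%N -> 0 < p (xs s) (xs s.+1) (us s)) ->
  p x y u = 0 -> phat R xs us t x y u = 0.
Proof.
move=> p_path pz; rewrite /phat /cnt3 big_nat big1 ?mul0r // => s /andP[s1 _].
case: (boolP [&& _, _ & _]) => // /and3P[/eqP e1 /eqP e2 /eqP e3].
by have := p_path s s1; rewrite e1 e2 e3 pz ltxx.
Qed.

Definition phat_fill (th : kernel R X U) : kernel R X U := fun x y u =>
  if (0 < cnt xs us x u t)%N then phat R xs us t x y u else th x y u.

Lemma phat_fill_Theta (p th : kernel R X U) :
  (forall s, (1 <= s)%N -> 0 < p (xs s) (xs s.+1) (us s)) ->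
  Theta p th -> Theta p (phat_fill th).
Proof.
rewrite /phat_fill => p_path [th01 [th_eq0 th_sum1]]; split; [|split] => x.
- by move=> y u; case: ifP => _; [exact: phat_itv | exact: th01].
- by move=> y u pz; case: ifP => _; [exact: phat_eq0 p_path pz | exact: th_eq0].
- by move=> u; case: (ltnP 0 (cnt xs us x u t)) => [|_]; [exact: sum_phat | exact: th_sum1].
Qed.
End EmpiricalKernel.

Section RbmleObjective.
Variables (R : realType) (X U : finType) (p : kernel R X U) (r : X -> U -> R).
Variables (a b : R) (x0 : X) (xs : nat -> X) (us : nat -> U) (k : nat) (pi : X -> U).
Hypothesis r_itv : forall x u, 0 < r x u <= 1.
Hypothesis alpha_k_ge0 : 0 <= alpha X U a b (tau k).

Local Notation obj := (rbmle_obj a b r x0 xs us k pi).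
Local Notation n x u := (cnt xs us x u (tau k)).
Local Notation phat_k := (phat R xs us (tau k)).

Lemma rbmle_obj_empirical_ge0 th : Theta p th ->
  (forall x y u, (0 < n x u)%N -> th x y u = phat_k x y u) -> (0 <= obj th)%E.
Proof.
move=> thT th_phat; rewrite /rbmle_obj big1 ?sube0 => [|[x u] _ /=].
  by rewrite lee_fin mulr_ge0 //; case/andP: (J_itv x0 pi r_itv thT).
have [->|n_gt0] := posnP (n x u); first by rewrite mul0e.
rewrite (_ : (fun y => th x y u) = (fun y => phat_k x y u)) ?KLxx ?mule0 //.
by apply/funext => y; exact: th_phat.
Qed.

Lemma cnt_KL_ge_sqr th x y u : Theta p th ->
  (((n x u)%:R * (2 * (phat_k x y u - th x y u) ^+ 2))%:E
    <= (n x u)%:R%:E * KL (fun y => phat_k x y u) (fun y => th x y u))%E.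
Proof.
move=> [th01 [_ th_sum1]]; have [->|n_gt0] := posnP (n x u); first by rewrite mul0r mul0e.
rewrite EFinM; apply: lee_wpmul2l; first by rewrite lee_fin.
apply: (KL_ge_sqr (P := fun z => phat_k x z u) (Q := fun z => th x z u)).
- by move=> z; case/andP: (phat_itv R xs us (tau k) x z u).
- by move=> z; case/andP: (th01 x z u).
- exact: sum_phat.
- exact: th_sum1.
Qed.

Lemma rbmle_obj_le th x y u : Theta p th ->
  (obj th <= (alpha X U a b (tau k)
               - (n x u)%:R * (2 * (phat_k x y u - th x y u) ^+ 2))%:E)%E.
Proof.
move=> thT; rewrite /rbmle_obj EFinB leeB //.
  by rewrite lee_fin ler_piMr //; case/andP: (J_itv x0 pi r_itv thT).
have term_ge0 (xu : X * U) : (0 <= (n xu.1 xu.2)%:R%:E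
    * KL (fun y => phat_k xu.1 y xu.2) (fun y => th xu.1 y xu.2))%E.
  apply: le_trans (cnt_KL_ge_sqr xu.1 y xu.2 thT).
  by rewrite lee_fin mulr_ge0 // mulr_ge0 // sqr_ge0.
rewrite (bigD1 (x, u)) //=; apply: le_trans (cnt_KL_ge_sqr x y u thT) _.
by apply: leeDl; apply: sume_ge0 => xu _.
Qed.
End RbmleObjective.

Lemma abs_le_sqrt_div (R : realType) (d c m : R) :
  0 < m -> m * (2 * d ^+ 2) <= c -> `|d| <= Num.sqrt (c / (2 * m)).
Proof.
move=> m0 le_c; have m2 : 0 < 2 * m by rewrite mulr_gt0.
have c0 : 0 <= c := le_trans (mulr_ge0 (ltW m0) (mulr_ge0 (ler0n _ 2) (sqr_ge0 d))) le_c.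
rewrite -sqrtr_sqr ler_sqrt ?divr_ge0 ?(ltW m2) //.
by rewrite ler_pdivlMr // (_ : d ^+ 2 * (2 * m) = m * (2 * d ^+ 2)) //; ring.
Qed.

Theorem lemma2 (R : realType) (X U : finType)
  (p : kernel R X U) (r : X -> U -> R) (a b : R)
  (xs : nat -> X) (us : nat -> U) (pol : nat -> X -> U) :
  (* p is a transition kernel *)
  p \in Theta p ->
  (* rewards in (0,1] *)
  (forall x u, 0 < r x u <= 1) ->
  (* constants of alpha *)
  0 < a -> 2 < b ->
  (* the sample path only makes transitions of positive probability *)
  (forall t, (1 <= t)%N -> 0 < p (xs t) (xs t.+1) (us t)) ->
  (* RBMLE: during episode j the policy pol j, a maximizer of I_j, is applied *)
  (forall j, forall pi' : X -> U,
      (rbmle_index p a b r (xs 1%N) xs us j pi'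
         <= rbmle_index p a b r (xs 1%N) xs us j (pol j))%E) ->
  (forall j t, (tau j <= t < tau j.+1)%N -> us t = pol j (xs t)) ->
  forall (k : nat) (pi : X -> U) (th : kernel R X U),
    th \in Theta p ->
    (forall th', th' \in Theta p ->
       (rbmle_obj a b r (xs 1%N) xs us k pi th'
          <= rbmle_obj a b r (xs 1%N) xs us k pi th)%E) ->
    forall x y u, (0 < cnt xs us x u (tau k))%N ->
      `| th x y u - phat R xs us (tau k) x y u |
        <= Num.sqrt (alpha X U a b (tau k) / (2 * (cnt xs us x u (tau k))%:R)).
Proof.
move=> _ r_itv a0 b2 p_path _ _ k pi th /[!inE] thT th_max x y u n_gt0.
have al0 : 0 <= alpha X U a b (tau k).
  by apply: (alpha_ge0 x u) => //; [exact: ltW | lra | exact: expn_gt0].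
have fillT := phat_fill_Theta (tau k) p_path thT.
have fill_phat x' y' u' : (0 < cnt xs us x' u' (tau k))%N ->
    phat_fill xs us (tau k) th x' y' u' = phat R xs us (tau k) x' y' u'.
  by rewrite /phat_fill => ->.
have obj_ge0 := le_trans (rbmle_obj_empirical_ge0 (xs 1%N) pi r_itv al0 fillT fill_phat)
  (th_max _ (mem_set fillT)).
have := le_trans obj_ge0 (rbmle_obj_le (xs 1%N) xs us pi r_itv al0 x y u thT).
rewrite lee_fin subr_ge0 distrC; apply: abs_le_sqrt_div.
by rewrite ltr0n.
Qed.
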